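(* Let $N\ge 2$, $0<p<1\le q$ with $pq<1$. Consider the vector field $g:\mathbb{R}^3\to\mathbb{R}^3$, $$g(Y,Z,W)=\big(Y(W-(N-2)-Y),\ Z(N+pY-Z),\ W(qZ-qN+q+N-W)\big).$$ Then the equilibrium $$\zeta_2=\Big(\frac{2+q}{1-pq},\ N+\frac{p(2+q)}{1-pq},\ N-2+\frac{2+q}{1-pq}\Big)$$ of $\zeta_t=g(\zeta)$ is asymptotically stable (indeed all eigenvalues of the Jacobian $Dg(\zeta_2)$ have negative real part). *)

From HB Require Import structures.
From mathcomp Require Import all_boot all_order all_algebra.
Set Implicit Arguments. Unset Strict Implicit. Unset Printing Implicit Defensive.
Import Order.TTheory GRing.Theory Num.Theory.
Local Open Scope ring_scope.

Definition g_field (C : numClosedFieldType) (N : nat) (p q : C) (Y Z W : C)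
  : C * C * C :=
  (Y * (W - (N%:R - 2) - Y),
   Z * (N%:R + p * Y - Z),
   W * (q * Z - q * N%:R + q + N%:R - W)).

Definition jac_g (C : numClosedFieldType) (N : nat) (p q : C) (Y Z W : C)
  : 'M[C]_3 :=
  \matrix_(i < 3, j < 3)
   nth 0 (nth [::]
     [:: [:: W - (N%:R - 2) - 2 * Y; 0; Y];
         [:: p * Z; N%:R + p * Y - 2 * Z; 0];
         [:: 0; q * W; q * Z - q * N%:R + q + N%:R - 2 * W]] i) j.

Definition zeta2 (C : numClosedFieldType) (N : nat) (p q : C) : C * C * C :=
  ((2 + q) / (1 - p * q),
   N%:R + p * (2 + q) / (1 - p * q),
   N%:R - 2 + (2 + q) / (1 - p * q)).

From HB Require Import structures.
From mathcomp Require Import all_boot all_order all_algebra.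
From mathcomp Require Import ring.
Import Order.TTheory GRing.Theory Num.Theory.
Local Open Scope ring_scope.

(* At an interior equilibrium the diagonal of the Jacobian is -(Y, Z, W) and the
   off-diagonal entries Y, pZ, qW form a 3-cycle, so every eigenvalue a satisfies
   (a + Y)(a + Z)(a + W) = pq YZW.  If Re a >= 0, each factor a + X has modulus at
   least X, so the left-hand side has modulus at least YZW > pq YZW. *)

Definition cyclic3_mx {R : nzRingType} (d0 d1 d2 c0 c1 c2 : R) : 'M[R]_3 :=
  \matrix_(i < 3, j < 3)
   nth 0 (nth [::] [:: [:: - d0; 0; c2]; [:: c0; - d1; 0]; [:: 0; c1; - d2]] i) j.

Lemma cyclic3_relations_mul {R : comNzRingType} {a d0 d1 d2 c0 c1 c2 v0 v1 v2 : R} :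
  (a + d0) * v0 = c0 * v1 -> (a + d1) * v1 = c1 * v2 -> (a + d2) * v2 = c2 * v0 ->
  (a + d0) * (a + d1) * (a + d2) * v0 = c0 * c1 * c2 * v0.
Proof.
move=> e0 e1 e2.
rewrite [LHS](_ : _ = (a + d1) * (a + d2) * ((a + d0) * v0)); last by ring.
rewrite e0 [LHS](_ : _ = c0 * (a + d2) * ((a + d1) * v1)); last by ring.
rewrite e1 [LHS](_ : _ = c0 * c1 * ((a + d2) * v2)); last by ring.
by rewrite e2 mulrA.
Qed.

Lemma eigenvalue_cyclic3_mx (F : fieldType) (d0 d1 d2 c0 c1 c2 a : F) :
  eigenvalue (cyclic3_mx d0 d1 d2 c0 c1 c2) a ->
  (a + d0) * (a + d1) * (a + d2) = c0 * c1 * c2.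
Proof.
case/eigenvalueP=> v hv vn0.
pose i1 : 'I_3 := lift 0 0; pose i2 : 'I_3 := lift 0 (lift 0 0).
have col j := congr1 (fun M : 'M_(1, 3) => M 0 j) hv.
move: (col 0) (col i1) (col i2); rewrite !mxE !big_ord_recl !big_ord0 !mxE /=.
set v0 := v 0 0; set v1 := v 0 i1; set v2 := v 0 i2.
rewrite !(mulr0, addr0, add0r) => e0 e1 e2.
have {}e0 : (a + d0) * v0 = c0 * v1 by rewrite mulrDl -e0; ring.
have {}e1 : (a + d1) * v1 = c1 * v2 by rewrite mulrDl -e1; ring.
have {}e2 : (a + d2) * v2 = c2 * v0 by rewrite mulrDl -e2; ring.
apply/eqP; apply: contraNT vn0 => neq; apply/eqP/rowP => j; rewrite mxE.
have cancel k : (a + d0) * (a + d1) * (a + d2) * k = c0 * c1 * c2 * k -> k = 0.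
  by move/eqP; rewrite -subr_eq0 -mulrBl mulf_eq0 subr_eq0 (negbTE neq) => /eqP.
case: j => -[|[|[|//]]] lt_j; apply: cancel.
- have -> : Ordinal lt_j = 0 by apply: val_inj.
  exact: cyclic3_relations_mul e0 e1 e2.
- have -> : Ordinal lt_j = i1 by apply: val_inj.
  rewrite -/v1.
  transitivity ((a + d1) * (a + d2) * (a + d0) * v1); first by ring.
  by rewrite (cyclic3_relations_mul e1 e2 e0); ring.
- have -> : Ordinal lt_j = i2 by apply: val_inj.
  rewrite -/v2.
  transitivity ((a + d2) * (a + d0) * (a + d1) * v2); first by ring.
  by rewrite (cyclic3_relations_mul e2 e0 e1); ring.
Qed.

Lemma ler_norm_addr_Re_ge0 (C : numClosedFieldType) (a y : C) :
  0 <= 'Re a -> 0 < y -> y <= `|a + y|.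
Proof.
move=> Re_a_ge0 y_gt0; apply: le_trans (leif_Re_Creal (a + y)).1.
have /Creal_ReP Re_y : y \is Num.real by apply: gtr0_real.
by rewrite raddfD /= Re_y lerDr.
Qed.

Lemma Re_lt0_cubic (C : numClosedFieldType) (a d0 d1 d2 c : C) :
  0 < d0 -> 0 < d1 -> 0 < d2 -> `|c| < d0 * d1 * d2 ->
  (a + d0) * (a + d1) * (a + d2) = c -> 'Re a < 0.
Proof.
move=> d0_gt0 d1_gt0 d2_gt0 c_lt eq_c.
rewrite real_ltNge ?Creal_Re ?real0 //; apply/negP => Re_a_ge0.
have : d0 * d1 * d2 <= `|c|.
  have norm_ge d : 0 < d -> d <= `|a + d| by apply: ler_norm_addr_Re_ge0.
  rewrite -eq_c !normrM.
  have ge0 := ltW d0_gt0; have ge1 := ltW d1_gt0; have ge2 := ltW d2_gt0.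
  by rewrite !ler_pM ?mulr_ge0 ?norm_ge.
by move=> /le_lt_trans/(_ c_lt); rewrite ltxx.
Qed.

Lemma jac_g_interior_equilibrium (C : numClosedFieldType) (N : nat) (p q Y Z W : C) :
  W - (N%:R - 2) - Y = 0 -> N%:R + p * Y - Z = 0 ->
  q * Z - q * N%:R + q + N%:R - W = 0 ->
  jac_g N p q Y Z W = cyclic3_mx Y Z W (p * Z) (q * W) Y.
Proof.
move=> eY eZ eW.
have shift (x y : C) : x - y = 0 -> x - 2 * y = - y.
  by move=> e; transitivity ((x - y) - y); [ring | rewrite e sub0r].
by rewrite /jac_g (shift _ _ eY) (shift _ _ eZ) (shift _ _ eW).
Qed.

Theorem lemma7p2 (C : numClosedFieldType) (N : nat) (p q : C)
  (hN : (2 <= N)%N) (hp0 : 0 < p) (hp1 : p < 1) (hq : 1 <= q)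
  (hpq : p * q < 1) :
  let '(Y, Z, W) := zeta2 N p q in
  g_field N p q Y Z W = (0, 0, 0) /\
  (forall a : C, eigenvalue (jac_g N p q Y Z W) a -> 'Re a < 0).
Proof.
have D_gt0 : 0 < 1 - p * q by rewrite subr_gt0.
have pq_gt0 : 0 < p * q by rewrite mulr_gt0 // (lt_le_trans ltr01).
rewrite /zeta2 -mulrA; set Y := (2 + q) / _.
set Z := N%:R + p * Y; set W := N%:R - 2 + Y.
have Y_gt0 : 0 < Y by rewrite divr_gt0 // addr_gt0 // (lt_le_trans ltr01).
have Z_gt0 : 0 < Z by rewrite ltr_wpDl // mulr_gt0.
have W_gt0 : 0 < W by rewrite ltr_wpDl // subr_ge0 ler_nat.
have eY : W - (N%:R - 2) - Y = 0 by rewrite /W; ring.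
have eZ : N%:R + p * Y - Z = 0 by rewrite /Z; ring.
have eW : q * Z - q * N%:R + q + N%:R - W = 0 by rewrite /W /Z /Y; field; rewrite gt_eqF.
split; first by rewrite /g_field eY eZ eW !mulr0.
move=> a; rewrite jac_g_interior_equilibrium // => /eigenvalue_cyclic3_mx.
apply: Re_lt0_cubic => //.
have -> : p * Z * (q * W) * Y = p * q * (Y * Z * W) by ring.
have YZW_gt0 : 0 < Y * Z * W by do 2?apply: mulr_gt0.
by rewrite (gtr0_norm (mulr_gt0 pq_gt0 YZW_gt0)) gtr_pMl.
Qed.
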